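(* Let $X$ be a compact metric space with metric $d$, let $f:X\to X$ be continuous, and let $A\subset X$. If $A$ is a uniformly chaotic set, then there exists a strictly increasing sequence $Q$ of positive integers such that $A$ is a distributional chaotic set in the sequence $Q$.
   Context: A set $B\subset X$ is uniformly proximal if for every $\epsilon>0$ there is $k\in\mathbb N$ with $d(f^k x,f^k y)<\epsilon$ for all $x,y\in B$; it is uniformly rigid if for every $\epsilon>0$ there is $k\in\mathbb N$ with $d(f^k x,x)<\epsilon$ for all $x\in B$. $A$ is uniformly chaotic if there are Cantor sets (subsets homeomorphic to the Cantor ternary set) $C_1\subset C_2\subset\cdots$ with $A=\bigcup_i C_i$ and each $C_i$ both uniformly proximal and uniformly rigid. For a strictly increasing sequence $Q=\{m_i\}$ of positive integers, $x,y\in X$, $t>0$, $n\ge1$, put $\Phi^n_{(xy,Q)}(t)=\frac1n\#\{1\le i\le n: d(f^{m_i}(x),f^{m_i}(y))\le t\}$, $\Phi_{(xy,Q)}(t)=\liminf_n\Phi^n_{(xy,Q)}(t)$, $\Phi^\star_{(xy,Q)}(t)=\limsup_n\Phi^n_{(xy,Q)}(t)$. A pair $(x,y)$ is a distributional scrambled pair in $Q$ if $\Phi^\star_{(xy,Q)}(t)=1$ for all $t>0$ and $\Phi_{(xy,Q)}(s)=0$ for some $s>0$. $A$ is a distributional chaotic set in $Q$ if every pair $(x,y)\in A\times A$ with $x\ne y$ is a distributional scrambled pair in $Q$. *)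

From HB Require Import structures.
From mathcomp Require Import all_boot all_order all_algebra.
From mathcomp Require Import all_classical all_reals all_analysis.
Set Implicit Arguments. Unset Strict Implicit. Unset Printing Implicit Defensive.
Import Order.TTheory GRing.Theory Num.Theory.
Import numFieldNormedType.Exports.
Local Open Scope classical_set_scope.
Local Open Scope ring_scope.

Definition cantor_ternary (R : realType) : set R :=
  [set x | exists a : nat -> bool,
     (fun n => \sum_(k < n) ((a k)%:R * 2 / 3 ^+ k.+1 : R)) @ \oo --> x].

Definition is_cantor_set (R : realType) (X : metricType R) (C : set X) : Prop :=
  exists (g : X -> R) (h : R -> X),
    [/\ {within C, continuous g},
        {within (@cantor_ternary R), continuous h},
        (forall x, C x -> (@cantor_ternary R) (g x) /\ h (g x) = x) &
        (forall y, (@cantor_ternary R) y -> C (h y) /\ g (h y) = y)].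

Definition uniformly_proximal (R : realType) (X : metricType R) (f : X -> X)
    (B : set X) : Prop :=
  forall eps : R, 0 < eps -> exists k : nat, (0 < k)%N /\
    forall x y, B x -> B y -> mdist (iter k f x) (iter k f y) < eps.

Definition uniformly_rigid (R : realType) (X : metricType R) (f : X -> X)
    (B : set X) : Prop :=
  forall eps : R, 0 < eps -> exists k : nat, (0 < k)%N /\
    forall x, B x -> mdist (iter k f x) x < eps.

Definition uniformly_chaotic (R : realType) (X : metricType R) (f : X -> X)
    (A : set X) : Prop :=
  exists C : nat -> set X,
    [/\ forall i, is_cantor_set (C i),
        forall i, C i `<=` C i.+1,
        A = \bigcup_i C i &
        forall i, uniformly_proximal f (C i) /\ uniformly_rigid f (C i)].

(* Q = {m_1 < m_2 < ...} represented 0-indexed: m_(i+1) = Q i. *)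
Definition pos_strict_incr (Q : nat -> nat) : Prop :=
  (0 < Q 0)%N /\ forall i, (Q i < Q i.+1)%N.

(* Phi^n_(xy,Q)(t) for n >= 1, here PhiN ... n t = Phi^(n+1)(t). *)
Definition PhiN (R : realType) (X : metricType R) (f : X -> X) (Q : nat -> nat)
    (x y : X) (n : nat) (t : R) : R :=
  (#|[set i : 'I_n.+1 | mdist (iter (Q i) f x) (iter (Q i) f y) <= t]|)%:R
    / (n.+1)%:R.

Definition Phi (R : realType) (X : metricType R) (f : X -> X) (Q : nat -> nat)
    (x y : X) (t : R) : R := limn_inf (fun n => PhiN f Q x y n t).

Definition Phi_star (R : realType) (X : metricType R) (f : X -> X)
    (Q : nat -> nat) (x y : X) (t : R) : R :=
  limn_sup (fun n => PhiN f Q x y n t).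

Definition distr_scrambled_pair (R : realType) (X : metricType R) (f : X -> X)
    (Q : nat -> nat) (x y : X) : Prop :=
  (forall t : R, 0 < t -> Phi_star f Q x y t = 1) /\
  (exists s : R, 0 < s /\ Phi f Q x y s = 0).

Definition distr_chaotic_set (R : realType) (X : metricType R) (f : X -> X)
    (Q : nat -> nat) (A : set X) : Prop :=
  forall x y, A x -> A y -> x <> y -> distr_scrambled_pair f Q x y.

From HB Require Import structures.
From mathcomp Require Import all_boot all_order all_algebra.
From mathcomp Require Import all_classical all_reals all_analysis.
From mathcomp Require Import zify lra.
Set Implicit Arguments. Unset Strict Implicit. Unset Printing Implicit Defensive.
Import Order.TTheory GRing.Theory Num.Theory.
Local Open Scope classical_set_scope.
Local Open Scope ring_scope.

(* Uniform proximality (resp. rigidity) of the Cantor set C_j provides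
   arbitrarily large times m at which all pairs of points of C_j are
   1/(j+1)-close (resp. every point of C_j is 1/(j+1)-close to its own
   image).  Cut the indices of Q into consecutive blocks, each longer than
   k+1 times everything before it, and fill the blocks alternately with such
   proximal and rigid times for C_0, C_0, C_1, C_1, ...  For x != y in A, at
   the end of each late proximal block almost all observed distances are
   small, so Phi* = 1; at the end of each late rigid block almost all
   observed distances are close to d(x, y), so Phi(d(x, y) / 3) = 0. *)

Section UnboundedSmallTimes.
Variables (R : realDomainType) (T : Type) (S : set T) (h : nat -> T -> R).
Hypothesis h_ge0 : forall k t, 0 <= h k t.
Hypothesis h_small : forall eps : R, 0 < eps ->
  exists k, (0 < k)%N /\ forall t, S t -> h k t < eps.
Hypothesis h_zero_unbounded : forall k, (0 < k)%N ->
  (forall t, S t -> h k t = 0) ->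
  forall N, exists2 m, (N <= m)%N & forall t, S t -> h m t = 0.

Lemma positive_gap_below N :
  ~ (exists k, (0 < k)%N /\ forall t, S t -> h k t = 0) ->
  exists2 d : R, 0 < d &
    forall k, (0 < k)%N -> (k < N)%N -> exists2 t, S t & d <= h k t.
Proof.
move=> no_zero; elim: N => [|N [d d_gt0 gapN]].
  by exists 1 => // k _; rewrite ltn0.
have [->|N_gt0] := posnP N.
  by exists d => // k k_gt0; rewrite ltnS leqn0 => /eqP k0; rewrite k0 in k_gt0.
have [t St hN_gt0] : exists2 t, S t & 0 < h N t.
  apply: contrapT => no_pos; apply: no_zero; exists N; split=> // t St.
  apply/eqP; rewrite eq_le h_ge0 andbT leNgt; apply/negP => hN_gt0.
  by apply: no_pos; exists t.
exists (Num.min d (h N t)); first by rewrite lt_min d_gt0 hN_gt0.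
move=> k k_gt0; rewrite ltnS leq_eqVlt => /orP[/eqP->|kN].
  by exists t => //; rewrite ge_min lexx orbT.
by have [t' St' ht'] := gapN k k_gt0 kN; exists t' => //; rewrite ge_min ht'.
Qed.

(* If some time is exactly 0 on S, the hypothesis h_zero_unbounded applies;
   otherwise the finitely many times below N stay a positive distance
   away from 0, so a small enough eps forces a time >= N. *)
Lemma small_times_unbounded (eps : R) N : 0 < eps ->
  exists2 k, (N <= k)%N & forall t, S t -> h k t < eps.
Proof.
move=> eps_gt0.
have [[k [k_gt0 hk0]] | no_zero] :=
  pselect (exists k, (0 < k)%N /\ forall t, S t -> h k t = 0).
  have [m Nm hm0] := h_zero_unbounded k_gt0 hk0 N.
  by exists m => // t St; rewrite hm0.
have [d d_gt0 gap] := positive_gap_below N no_zero.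
have /h_small [k [k_gt0 hk]] : 0 < Num.min eps d.
  by rewrite lt_min eps_gt0 d_gt0.
exists k => [|t St]; last first.
  by apply: lt_le_trans (hk t St) _; rewrite ge_min lexx.
rewrite leqNgt; apply/negP => kN; have [t St dh] := gap k k_gt0 kN.
by move: (hk t St); rewrite lt_min => /andP[_]; rewrite ltNge dh.
Qed.

End UnboundedSmallTimes.

Section UnboundedTimes.
Variables (R : realType) (X : metricType R) (f : X -> X) (B : set X).

Lemma uniformly_proximal_unbounded : uniformly_proximal f B ->
  forall (eps : R) N, 0 < eps -> exists2 k, (N <= k)%N &
    forall x y, B x -> B y -> mdist (iter k f x) (iter k f y) < eps.
Proof.
move=> prox eps N eps_gt0.
have [|e e_gt0|k _ hk0 M|k Nk hk] := @small_times_unbounded R (X * X)%type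
    [set p | B p.1 /\ B p.2] (fun k p => mdist (iter k f p.1) (iter k f p.2))
    _ _ _ eps N eps_gt0.
- by move=> *; exact: mdist_ge0.
- have [k [k_gt0 hk]] := prox e e_gt0.
  by exists k; split=> // -[x y] [/= Bx By]; exact: hk.
- exists (M + k)%N => [|p Bp]; first exact: leq_addr.
  by rewrite !iterD; have /mdist_positivity -> := hk0 p Bp; exact: mdistxx.
- by exists k => // x y Bx By; exact: (hk (x, y)).
Qed.

Lemma uniformly_rigid_unbounded : uniformly_rigid f B ->
  forall (eps : R) N, 0 < eps -> exists2 k, (N <= k)%N &
    forall x, B x -> mdist (iter k f x) x < eps.
Proof.
move=> rigid eps N eps_gt0.
apply: (@small_times_unbounded R X B (fun k x => mdist (iter k f x) x)) => //.
- by move=> *; exact: mdist_ge0.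
- move=> k k_gt0 hk0 M; exists (M * k)%N => [|x Bx]; first by rewrite leq_pmulr.
  have /mdist_positivity fixed := hk0 x Bx.
  by rewrite iterM (iter_fix _ fixed) mdistxx.
Qed.

End UnboundedTimes.

Fixpoint block_start (k : nat) : nat :=
  if k is k'.+1 then (k'.+2 * (block_start k').+1)%N else 0%N.

Definition in_block (k i : nat) : bool :=
  (block_start k <= i < block_start k.+1)%N.

Lemma block_start_ltS k : (block_start k < block_start k.+1)%N.
Proof. by rewrite /=; nia. Qed.

Lemma block_start_leq : {homo block_start : k l / (k <= l)%N}.
Proof. by apply: ltnW_homo; apply: homo_ltn ltn_trans block_start_ltS. Qed.

Lemma leq_block_start k : (k <= block_start k)%N.
Proof. by elim: k => //= k IH; nia. Qed.

Lemma leq_block_end k : (k <= (block_start k.+1).-1)%N.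
Proof. by have := leq_block_start k; have := block_start_ltS k; lia. Qed.

Fixpoint block_of (i : nat) : nat :=
  if i is i'.+1 then
    (if i == block_start (block_of i').+1 then (block_of i').+1 else block_of i')
  else 0%N.

Lemma in_block_of i : in_block (block_of i) i.
Proof.
elim: i => [|i /andP[lo hi]] //.
(* Unfold block_of once by hand: [/=] would also unfold block_start. *)
have -> : block_of i.+1 =
  if i.+1 == block_start (block_of i).+1 then (block_of i).+1 else block_of i.
  by [].
case: eqP => [->|ne]; first by rewrite /in_block block_start_ltS andbT leqnn.
by rewrite /in_block (leqW lo) ltn_neqAle hi andbT; apply/eqP.
Qed.

Lemma in_block_uniq k l i : in_block k i -> in_block l i -> k = l.
Proof.
move=> /andP[lo_k hi_k] /andP[lo_l hi_l].
have le_blocks m n :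
    (block_start m <= i)%N -> (i < block_start n.+1)%N -> (m <= n)%N.
  move=> lo hi; rewrite leqNgt; apply/negP => /block_start_leq lt_mn.
  by move: (leq_trans lt_mn lo); rewrite leqNgt hi.
by apply/eqP; rewrite eqn_leq (le_blocks k l) ?(le_blocks l k).
Qed.

Lemma block_ofE k i : in_block k i -> block_of i = k.
Proof. exact: in_block_uniq (in_block_of i). Qed.

Lemma exists_seq_in_blocks (S : nat -> nat -> Prop) :
  (forall k N, exists2 m, (N <= m)%N & S k m) ->
  exists Q, pos_strict_incr Q /\ forall k i, in_block k i -> S k (Q i).
Proof.
move=> S_unbounded; pose sel k N := projT1 (cid2 (S_unbounded k N)).
have selP k N : (N <= sel k N)%N /\ S k (sel k N).
  by rewrite /sel; case: cid2.
pose fix Q i := sel (block_of i) (if i is i'.+1 then (Q i').+1 else 1%N).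
exists Q; split; first split.
- exact: (selP 0%N 1%N).1.
- by move=> i; exact: (selP _ _).1.
by move=> k [|i] /block_ofE <-; exact: (selP _ _).2.
Qed.

(* As in PhiN, [set i : 'I_n | _] is a classical set, counted through its
   membership predicate. *)
Lemma card_set_ord_sum n (P : pred nat) :
  #|[set i : 'I_n | P i]| = (\sum_(0 <= i < n) P i)%N.
Proof.
rewrite -sum1_card big_mkcond /= big_mkord; apply: eq_bigr => i _.
have -> : (i \in [set j : 'I_n | P j]) = P i.
  by apply/idP/idP => [/set_mem //|]; exact: mem_set.
by case: (P i).
Qed.

Lemma card_set_ord_ge n m (P : pred nat) :
  (forall i, (m <= i < n)%N -> P i) -> (n - m <= #|[set i : 'I_n | P i]|)%N.
Proof.
move=> P_range; have [mn|/ltnW nm] := leqP m n; last first.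
  by rewrite (eqP nm).
rewrite card_set_ord_sum (big_cat_nat (leq0n m) mn) /=.
rewrite -[(n - m)%N]muln1 -sum_nat_const_nat (leq_trans _ (leq_addl _ _)) //.
rewrite big_nat_cond [X in (_ <= X)%N]big_nat_cond.
by rewrite leq_sum // => i /andP[/P_range ->].
Qed.

Lemma card_set_ord_le n m (P : pred nat) :
  (forall i, (m <= i < n)%N -> ~~ P i) -> (#|[set i : 'I_n | P i]| <= m)%N.
Proof.
move=> notP_range; have [mn|/ltnW nm] := leqP m n; last first.
  by apply: leq_trans nm; rewrite -[X in (_ <= X)%N]card_ord max_card.
rewrite card_set_ord_sum (big_cat_nat (leq0n m) mn) /=.
have -> : (\sum_(m <= i < n) P i = 0)%N.
  by rewrite big_nat_cond big1 // => i /andP[/notP_range /negbTE ->].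
rewrite addn0 -[X in (_ <= X)%N]subn0 -[X in (_ <= X)%N]muln1.
by rewrite -sum_nat_const_nat leq_sum // => i _; case: (P i).
Qed.

Lemma inv_succ_lt_eventually (R : archiRealFieldType) (e : R) : 0 < e ->
  exists J, forall j, (J <= j)%N -> (j.+1%:R)^-1 < e.
Proof.
move=> e_gt0; exists (Num.truncn e^-1) => j Jj.
rewrite invf_plt ?posrE ?ltr0Sn //.
by apply: lt_le_trans (truncnS_gt _) _; rewrite ler_nat ltnS.
Qed.

Lemma block_start_ratio (R : numFieldType) k :
  (block_start k)%:R / (block_start k.+1)%:R <= (k.+2%:R)^-1 :> R.
Proof.
rewrite ler_pdivrMr ?ltr0n ?(leq_ltn_trans _ (block_start_ltS k)) //.
by rewrite /= natrM mulrA mulVf ?pnatr_eq0 // mul1r ler_nat.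
Qed.

Section LimnBounds.
Variable R : realType.

Lemma sups_eq_bound (u : R^nat) (b : R) : (forall n, u n <= b) ->
  (forall eps, 0 < eps -> forall n, exists2 m, (n <= m)%N & b - eps <= u m) ->
  sups u = fun=> b.
Proof.
move=> u_le near_b; apply/funext => n.
apply/eqP; rewrite eq_le; apply/andP; split.
  by apply: ge_sup => [|_ [m _ <-]]; [exists (u n), n => /= | exact: u_le].
apply/ler_addgt0Pr => e e_gt0; have [m nm um] := near_b e e_gt0 n.
suff : u m <= sup (sdrop u n) by rewrite /sups /=; lra.
by apply: ub_le_sup; [exists b => _ [k _ <-]; exact: u_le | exists m].
Qed.

Lemma limn_sup_eq_bound (u : R^nat) (b : R) : (forall n, u n <= b) ->
  (forall eps, 0 < eps -> forall n, exists2 m, (n <= m)%N & b - eps <= u m) ->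
  limn_sup u = b.
Proof.
by move=> u_le near_b; rewrite /limn_sup (sups_eq_bound u_le near_b) lim_cst.
Qed.

Lemma limn_inf_eq_bound (u : R^nat) (b : R) : (forall n, b <= u n) ->
  (forall eps, 0 < eps -> forall n, exists2 m, (n <= m)%N & u m <= b + eps) ->
  limn_inf u = b.
Proof.
move=> u_ge near_b.
have infsE : infs u = fun=> b.
  have -> : u = -%R \o (-%R \o u) by apply/funext => n /=; rewrite opprK.
  rewrite infsN (@sups_eq_bound _ (- b)) => [|n|e e_gt0 n] /=.
  - by apply/funext => n /=; rewrite opprK.
  - by rewrite lerN2.
  - by have [m nm um] := near_b e e_gt0 n; exists m => //; rewrite -opprD lerN2.
by rewrite /limn_inf infsE lim_cst.
Qed.

End LimnBounds.

Definition frequently_on_blocks (P : nat -> Prop) : Prop :=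
  forall N, exists2 k, (N <= k)%N & forall i, in_block k i -> P i.

Lemma frequently_on_late_blocks (R : realType) (P : nat -> Prop) (e : R) :
  0 < e -> frequently_on_blocks P -> forall n, exists k,
  [/\ (n <= (block_start k.+1).-1)%N, (k.+2%:R)^-1 < e &
      forall i, in_block k i -> P i].
Proof.
move=> e_gt0 often n; have [J J_e] := inv_succ_lt_eventually e_gt0.
have [k] := often (maxn n J); rewrite geq_max => /andP[nk Jk] Pk.
exists k; split=> //; last exact/J_e/leqW.
exact: leq_trans nk (leq_block_end k).
Qed.

Section BlockDensities.
Variables (R : realType) (X : metricType R) (f : X -> X) (Q : nat -> nat).
Variables (x y : X).

Let dist_at i := mdist (iter (Q i) f x) (iter (Q i) f y).

Lemma PhiN_ge0 n t : 0 <= PhiN f Q x y n t.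
Proof. by rewrite /PhiN divr_ge0. Qed.

Lemma PhiN_le1 n t : PhiN f Q x y n t <= 1.
Proof.
rewrite /PhiN ler_pdivrMr ?ltr0Sn // mul1r ler_nat.
by rewrite -[X in (_ <= X)%N]card_ord max_card.
Qed.

Lemma PhiN_block_end_ge k t : (forall i, in_block k i -> dist_at i <= t) ->
  1 - (k.+2%:R)^-1 <= PhiN f Q x y (block_start k.+1).-1 t.
Proof.
move=> close; have lt_mn := block_start_ltS k.
rewrite /PhiN prednK ?(leq_ltn_trans _ lt_mn) //.
have count_ge : (block_start k.+1 - block_start k <=
    #|[set i : 'I_(block_start k.+1) | (dist_at i <= t)%R]|)%N.
  by apply: (card_set_ord_ge (P := fun i => dist_at i <= t)) => i; exact: close.
apply: le_trans (_ : 1 - (block_start k)%:R / (block_start k.+1)%:R <= _).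
  by rewrite lerD2l lerN2; exact: block_start_ratio.
rewrite ler_pdivlMr ?ltr0n ?(leq_ltn_trans _ lt_mn) // mulrBl mul1r.
rewrite divfK ?pnatr_eq0 -?lt0n ?(leq_ltn_trans _ lt_mn) //.
by rewrite -natrB ?ler_nat // ltnW.
Qed.

Lemma PhiN_block_end_le k t : (forall i, in_block k i -> t < dist_at i) ->
  PhiN f Q x y (block_start k.+1).-1 t <= (k.+2%:R)^-1.
Proof.
move=> far; rewrite /PhiN prednK ?(leq_ltn_trans _ (block_start_ltS k)) //.
have count_le : (#|[set i : 'I_(block_start k.+1) | (dist_at i <= t)%R]|
    <= block_start k)%N.
  apply: (card_set_ord_le (P := fun i => dist_at i <= t)) => i /far.
  by rewrite -ltNge.
apply: le_trans (block_start_ratio _ k).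
by rewrite ler_wpM2r ?invr_ge0 // ler_nat.
Qed.

Lemma Phi_star_eq1_of_blocks t :
  frequently_on_blocks (fun i => dist_at i <= t) -> Phi_star f Q x y t = 1.
Proof.
move=> often; apply: limn_sup_eq_bound => [n|e e_gt0 n]; first exact: PhiN_le1.
have [k [nk k_e close]] := frequently_on_late_blocks e_gt0 often n.
exists (block_start k.+1).-1 => //; apply: le_trans (PhiN_block_end_ge close).
by rewrite lerD2l lerN2 ltW.
Qed.

Lemma Phi_eq0_of_blocks s :
  frequently_on_blocks (fun i => s < dist_at i) -> Phi f Q x y s = 0.
Proof.
move=> often; apply: limn_inf_eq_bound => [n|e e_gt0 n]; first exact: PhiN_ge0.
have [k [nk k_e far]] := frequently_on_late_blocks e_gt0 often n.
exists (block_start k.+1).-1 => //; apply: le_trans (PhiN_block_end_le far) _.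
by rewrite add0r ltW.
Qed.

End BlockDensities.

Lemma mdist_gt_third (R : realFieldType) (X : metricType R) (x y a b : X) :
  mdist a x < mdist x y / 3 -> mdist b y < mdist x y / 3 ->
  mdist x y / 3 < mdist a b.
Proof.
move=> ax_lt by_lt.
have xy_le : mdist x y <= mdist a x + mdist a b + mdist b y.
  rewrite (metric_sym a x); apply: le_trans (metric_triangle x a y) _.
  by rewrite -addrA lerD2l; apply: le_trans (metric_triangle a b y) _.
lra.
Qed.

Section UniformlyChaoticChain.
Variables (R : realType) (X : metricType R) (f : X -> X) (C : nat -> set X).

Definition chain_time (k m : nat) : Prop :=
  if odd k then forall x, C k./2 x -> mdist (iter m f x) x < (k./2.+1%:R)^-1
  else forall x y, C k./2 x -> C k./2 y ->
    mdist (iter m f x) (iter m f y) < (k./2.+1%:R)^-1.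

Lemma chain_time_unbounded :
  (forall i, uniformly_proximal f (C i) /\ uniformly_rigid f (C i)) ->
  forall k N, exists2 m, (N <= m)%N & chain_time k m.
Proof.
move=> chaotic k N; have e_gt0 : 0 < (k./2.+1%:R : R)^-1 by rewrite invr_gt0.
rewrite /chain_time; case: odd.
- exact: uniformly_rigid_unbounded (chaotic _).2 _ N e_gt0.
- exact: uniformly_proximal_unbounded (chaotic _).1 _ N e_gt0.
Qed.

Lemma chain_distr_chaotic (Q : nat -> nat) : (forall i, C i `<=` C i.+1) ->
  (forall k i, in_block k i -> chain_time k (Q i)) ->
  distr_chaotic_set f Q (\bigcup_i C i).
Proof.
move=> C_incr Q_chain x y [i _ Cx] [j _ Cy] xy.
have C_mono : {homo C : l l' / (l <= l')%N >-> l `<=` l'}.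
  apply: (homo_leq _ _ C_incr) => [A|B A D].
  - exact: subset_refl.
  - exact: subset_trans.
have late_index (e : R) : 0 < e -> forall N, exists l,
    [/\ (N <= l)%N, C l x /\ C l y & (l.+1%:R)^-1 < e].
  move=> e_gt0 N; have [J J_e] := inv_succ_lt_eventually e_gt0.
  pose l := maxn (maxn i j) (maxn N J).
  have [il jl Nl Jl] : [/\ i <= l, j <= l, N <= l & J <= l]%N.
    by rewrite /l !leq_max !leqnn !orbT.
  exists l; split=> //; last exact: J_e.
  by split; [exact: C_mono il _ Cx | exact: C_mono jl _ Cy].
have le_double l : (l <= l.*2)%N by rewrite -addnn leq_addr.
split=> [t t_gt0|].
  apply: Phi_star_eq1_of_blocks => N.
  have [l [Nl [Clx Cly] l_t]] := late_index t t_gt0 N.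
  exists l.*2 => [|n /Q_chain]; first exact: leq_trans Nl (le_double l).
  rewrite /chain_time odd_double doubleK => proximal.
  exact/ltW/(lt_trans (proximal x y Clx Cly) l_t).
have d_gt0 : 0 < mdist x y / 3 by rewrite divr_gt0 // mdist_gt0; apply/eqP.
exists (mdist x y / 3); split=> //.
apply: Phi_eq0_of_blocks => N.
have [l [Nl [Clx Cly] l_d]] := late_index _ d_gt0 N.
exists l.*2.+1 => [|n /Q_chain]; first exact/leqW/(leq_trans Nl (le_double l)).
rewrite /chain_time /= odd_double uphalf_double => rigid.
by apply: mdist_gt_third; exact: lt_trans (rigid _ _) l_d.
Qed.

End UniformlyChaoticChain.

Theorem theorem4p2 (R : realType) (X : metricType R) (f : X -> X) (A : set X) :
  compact [set: X] -> continuous f -> uniformly_chaotic f A ->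
  exists Q : nat -> nat, pos_strict_incr Q /\ distr_chaotic_set f Q A.
Proof.
move=> _ _ [C [_ C_incr -> chaotic]].
have [Q [Q_incr Q_chain]] := exists_seq_in_blocks (chain_time_unbounded chaotic).
by exists Q; split=> //; exact: chain_distr_chaotic.
Qed.
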